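(* Let $c_2,c_3,c_4,c_6,v$ be independent indeterminates and set $\mu(v)=(\mu_1,\mu_2,\mu_3,\mu_4,\mu_6)=(0,\;3v+c_2,\;c_3,\;3v^2+2c_2v+c_4,\;v^3+c_2v^2+c_4v+c_6)$. Let $S(t,v)=s(t;\mu(v))$. Then \[ \frac{\partial S}{\partial v}=S\,\frac{\partial S}{\partial t}, \] and $S(t,0)=s_0(t)$, where $s_0(t)$ is the power series with $s_0(0)=0$ defined by $s_0=t^3+c_2t^2s_0+c_3s_0^2+c_4ts_0^2+c_6s_0^3$.
   Context: For parameters $\mu=(\mu_1,\mu_2,\mu_3,\mu_4,\mu_6)$, $s(t;\mu)$ denotes the unique formal power series in $t$ with $s(0;\mu)=0$ satisfying $s=t^3+\mu_1ts+\mu_2t^2s+\mu_3s^2+\mu_4ts^2+\mu_6s^3$ (the equation of the cubic $y^2+\mu_1xy+\mu_3y=x^3+\mu_2x^2+\mu_4x+\mu_6$ in Tate coordinates $t=-x/y$, $s=-1/y$). *)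

From HB Require Import structures.
From mathcomp Require Import all_boot all_order all_algebra.
From mathcomp Require Export mpoly.
Set Implicit Arguments. Unset Strict Implicit. Unset Printing Implicit Defensive.
Import Order.TTheory GRing.Theory Num.Theory.
Local Open Scope ring_scope.

Section FPS.
Variable A : comRingType.

(* formal power series sum_n f n t^n *)
Definition fps := nat -> A.
Definition fadd (f g : fps) : fps := fun n => f n + g n.
Definition fmul (f g : fps) : fps := fun n => \sum_(i < n.+1) f i * g (n - i)%N.
Definition fscale (a : A) (f : fps) : fps := fun n => a * f n.
Definition fT : fps := fun n => (n == 1%N)%:R.
Definition fderiv (f : fps) : fps := fun n => f n.+1 *+ n.+1.

Definition is_tate_s (mu1 mu2 mu3 mu4 mu6 : A) (s : fps) : Prop :=
  s 0%N = 0 /\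
  s = fadd (fmul fT (fmul fT fT))
      (fadd (fscale mu1 (fmul fT s))
      (fadd (fscale mu2 (fmul (fmul fT fT) s))
      (fadd (fscale mu3 (fmul s s))
      (fadd (fscale mu4 (fmul fT (fmul s s)))
            (fscale mu6 (fmul s (fmul s s))))))).
End FPS.

(* Coefficient ring: Z[c2,c3,c4,c6] = {mpoly int[4]} with c2 = 'X_0, c3 = 'X_1,
   c4 = 'X_2, c6 = 'X_3; the indeterminate v is the polynomial variable of
   {poly {mpoly int[4]}}. *)
Definition Cring := {mpoly int[4]}.
Definition c2 : Cring := 'X_(0 : 'I_4).
Definition c3 : Cring := 'X_(1 : 'I_4).
Definition c4 : Cring := 'X_(2 : 'I_4).
Definition c6 : Cring := 'X_(3 : 'I_4).
Definition Vring := {poly Cring}.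
Definition v : Vring := 'X.

Definition mu1v : Vring := 0.
Definition mu2v : Vring := 3%:R * v + c2%:P.
Definition mu3v : Vring := c3%:P.
Definition mu4v : Vring := 3%:R * v ^+ 2 + 2%:R * c2%:P * v + c4%:P.
Definition mu6v : Vring := v ^+ 3 + c2%:P * v ^+ 2 + c4%:P * v + c6%:P.

Definition dv (S : fps Vring) : fps Vring := fun n => (S n)^`().
Definition at_v0 (S : fps Vring) : fps Cring := fun n => (S n).[0].

(** Write [S = F(t, S)] with [F(t, s) = t^3 + mu2 t^2 s + mu3 s^2 + mu4 t s^2 + mu6 s^3]
    ([mu1 = 0]). Differentiating in [v] and in [t] gives [S_v = F_v + F_s S_v] and
    [S_t = F_t + F_s S_t]. The derivatives [mu2' = 3], [mu3' = 0], [mu4' = 2 mu2] and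
    [mu6' = mu4] are exactly what makes [F_v = s F_t], so [E = S_v - S S_t] satisfies
    [E = F_s E]; since [F_s] has no constant term, [E = 0]. At [v = 0]: evaluating the
    coefficients is a ring morphism sending [mu(v)] to [(0, c2, c3, c4, c6)], and the
    equation has a unique solution with zero constant term. *)
From HB Require Import structures.
From mathcomp Require Import all_boot all_order all_algebra.
From Stdlib Require Import FunctionalExtensionality Ring.
Set Implicit Arguments. Unset Strict Implicit. Unset Printing Implicit Defensive.
Import GRing.Theory.
Local Open Scope ring_scope.

Lemma eq_coefMl (R : comRingType) (p q r : {poly R}) n :
  (forall i, (i <= n)%N -> p`_i = q`_i) -> (p * r)`_n = (q * r)`_n.
Proof. by move=> eq_pq; rewrite !coefM; apply: eq_bigr => i _; rewrite eq_pq // -ltnS. Qed.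

Definition fps_map (A B : comRingType) (phi : A -> B) (f : fps A) : fps B :=
  fun n => phi (f n).

Section FormalPowerSeries.
Variable A : comRingType.
Implicit Types (f g h k : fps A) (a : A).

Definition fcst a : fps A := fun n => if n is 0%N then a else 0.
Definition fzero : fps A := fun _ => 0.
Definition fone : fps A := fcst 1.
Definition fopp f : fps A := fun n => - f n.
Definition fsub f g : fps A := fadd f (fopp g).
Definition ftrunc (N : nat) f : {poly A} := \poly_(i < N) f i.

Lemma coef_ftrunc N f i : (i < N)%N -> (ftrunc N f)`_i = f i.
Proof. by move=> ltiN; rewrite coef_poly ltiN. Qed.

Lemma fmul_ftrunc N f g n : (n < N)%N -> fmul f g n = (ftrunc N f * ftrunc N g)`_n.
Proof.
move=> ltnN; rewrite coefM; apply: eq_bigr => i _.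
by rewrite !coef_ftrunc // (leq_ltn_trans _ ltnN) ?leq_subr // -ltnS.
Qed.

Lemma fmulC f g : fmul f g = fmul g f.
Proof. by apply: functional_extensionality => n; rewrite !(@fmul_ftrunc n.+1) // mulrC. Qed.

Lemma fmulA f g h : fmul f (fmul g h) = fmul (fmul f g) h.
Proof.
apply: functional_extensionality => n.
have trunc_fmul f1 f2 i : (i <= n)%N ->
    (ftrunc n.+1 (fmul f1 f2))`_i = (ftrunc n.+1 f1 * ftrunc n.+1 f2)`_i.
  by move=> lein; rewrite coef_ftrunc // -fmul_ftrunc.
rewrite !(@fmul_ftrunc n.+1) // [RHS](eq_coefMl _ (trunc_fmul f g)).
by rewrite mulrC (eq_coefMl _ (trunc_fmul g h)) mulrC mulrA.
Qed.

Lemma fmulDl f g h : fmul (fadd f g) h = fadd (fmul f h) (fmul g h).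
Proof.
apply: functional_extensionality => n; rewrite /fmul /fadd -big_split /=.
by apply: eq_bigr => i _; rewrite mulrDl.
Qed.

Lemma fmul_fcst a f : fmul (fcst a) f = fscale a f.
Proof.
apply: functional_extensionality => n; rewrite /fmul big_ord_recl /= subn0.
by rewrite big1 ?addr0 // => i _; rewrite mul0r.
Qed.

Lemma fps_ring_theory : ring_theory fzero fone (@fadd A) (@fmul A) fsub fopp eq.
Proof.
split=> [f|f g|f g h|f|f g|f g h|f g h|//|f].
- by apply: functional_extensionality => n; rewrite /fadd add0r.
- by apply: functional_extensionality => n; rewrite /fadd addrC.
- by apply: functional_extensionality => n; rewrite /fadd addrA.
- by rewrite /fone fmul_fcst; apply: functional_extensionality => n; rewrite /fscale mul1r.
- exact: fmulC.
- exact: fmulA.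
- exact: fmulDl.
- by apply: functional_extensionality => n; rewrite /fadd /fopp subrr.
Qed.

Add Ring fps_ring : fps_ring_theory.

Lemma fcst0 : fcst 0 = fzero.
Proof. by apply: functional_extensionality => -[|n]. Qed.

Lemma fcstD a b : fcst (a + b) = fadd (fcst a) (fcst b).
Proof. by apply: functional_extensionality => -[|n] //; rewrite /fadd addr0. Qed.

Lemma fcstM a b : fcst (a * b) = fmul (fcst a) (fcst b).
Proof.
rewrite fmul_fcst; apply: functional_extensionality => -[|n] //.
by rewrite /fscale mulr0.
Qed.

Lemma fcst_natr n : fcst n%:R = iter n (fadd fone) fzero.
Proof. by elim: n => [|n IHn]; rewrite ?mulr0n ?fcst0 // mulrS fcstD IHn. Qed.

Lemma fmul_coef0 f g : fmul f g 0 = f 0%N * g 0%N.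
Proof. by rewrite /fmul big_ord1. Qed.

Lemma fT_coef0 : fT A 0 = 0.
Proof. by []. Qed.

Lemma fderivD f g : fderiv (fadd f g) = fadd (fderiv f) (fderiv g).
Proof. by apply: functional_extensionality => n; rewrite /fderiv /fadd mulrnDl. Qed.

Lemma fderivM f g : fderiv (fmul f g) = fadd (fmul (fderiv f) g) (fmul f (fderiv g)).
Proof.
apply: functional_extensionality => n.
have trunc_fderiv f1 i : (i <= n)%N ->
    (ftrunc n.+2 f1)^`()`_i = (ftrunc n.+2 (fderiv f1))`_i.
  by move=> lein; rewrite coef_deriv !coef_ftrunc // ltnS ltnW.
rewrite /fderiv /fadd (@fmul_ftrunc n.+2) // -coef_deriv derivM coefD.
rewrite !(@fmul_ftrunc n.+2) // (eq_coefMl _ (trunc_fderiv f)); congr (_ + _).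
by rewrite mulrC (eq_coefMl _ (trunc_fderiv g)) mulrC.
Qed.

Lemma fderivZ a f : fderiv (fscale a f) = fscale a (fderiv f).
Proof. by apply: functional_extensionality => n; rewrite /fderiv /fscale mulrnAr. Qed.

Lemma fderivT : fderiv (fT A) = fone.
Proof. by apply: functional_extensionality => -[|n]; rewrite /fderiv /fT //= mul0rn. Qed.

Lemma fsub_eq0 f g : fsub f g = fzero -> f = g.
Proof. by move=> fg0; transitivity (fadd (fsub f g) g); [ring | rewrite fg0; ring]. Qed.

(** Coefficient [n] of [f k] is [f n * k 0] plus terms involving only lower
    coefficients of [f], so [f = 0] by strong induction. *)
Lemma fixed_fmulr_eq0 f k : f = fmul f k -> k 0%N = 0 -> f = fzero.
Proof.
move=> f_fixed k0; apply: functional_extensionality => n; elim/ltn_ind: n => n IHn.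
rewrite f_fixed /fmul big_ord_recr /= subnn k0 mulr0 addr0.
by apply: big1 => i _; rewrite IHn ?mul0r.
Qed.

Definition tate_rhs (m1 m2 m3 m4 m6 : A) (s : fps A) : fps A :=
  fadd (fmul (fT A) (fmul (fT A) (fT A)))
      (fadd (fscale m1 (fmul (fT A) s))
      (fadd (fscale m2 (fmul (fmul (fT A) (fT A)) s))
      (fadd (fscale m3 (fmul s s))
      (fadd (fscale m4 (fmul (fT A) (fmul s s)))
            (fscale m6 (fmul s (fmul s s))))))).

Lemma is_tate_sE m1 m2 m3 m4 m6 s :
  is_tate_s m1 m2 m3 m4 m6 s <-> s 0%N = 0 /\ s = tate_rhs m1 m2 m3 m4 m6 s.
Proof. by []. Qed.

Section Uniqueness.
Variables m1 m2 m3 m4 m6 : A.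

(** [(F(t, s) - F(t, s')) / (s - s')] for the right-hand side [F = tate_rhs]. *)
Definition tate_rhs_dq (s s' : fps A) : fps A :=
  fadd (fscale m1 (fT A))
  (fadd (fscale m2 (fmul (fT A) (fT A)))
  (fadd (fscale m3 (fadd s s'))
  (fadd (fscale m4 (fmul (fT A) (fadd s s')))
        (fscale m6 (fadd (fmul s s) (fadd (fmul s s') (fmul s' s'))))))).

Lemma tate_rhsB s s' :
  fsub (tate_rhs m1 m2 m3 m4 m6 s) (tate_rhs m1 m2 m3 m4 m6 s') =
  fmul (fsub s s') (tate_rhs_dq s s').
Proof. rewrite /tate_rhs /tate_rhs_dq -!fmul_fcst; ring. Qed.

Lemma tate_rhs_dq_coef0 s s' : s 0%N = 0 -> s' 0%N = 0 -> tate_rhs_dq s s' 0%N = 0.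
Proof.
move=> s0 s'0; rewrite /tate_rhs_dq /fadd /fscale !fmul_coef0 s0 s'0 fT_coef0.
by rewrite !(mulr0, addr0).
Qed.

Lemma is_tate_s_uniq s s' :
  is_tate_s m1 m2 m3 m4 m6 s -> is_tate_s m1 m2 m3 m4 m6 s' -> s = s'.
Proof.
move=> /is_tate_sE[s0 eq_s] /is_tate_sE[s'0 eq_s']; apply: fsub_eq0.
apply: fixed_fmulr_eq0 (tate_rhs_dq_coef0 s0 s'0).
by rewrite -tate_rhsB -eq_s -eq_s'.
Qed.

End Uniqueness.

Section Derivation.
Variable d : {additive A -> A}.
Hypothesis derM : forall a b, d (a * b) = d a * b + a * d b.

Lemma derivation_natr n : d n%:R = 0.
Proof.
have /eqP := derM 1 1.
rewrite !(mulr1, mul1r) -{1}[d 1]addr0 (inj_eq (addrI _)) eq_sym => /eqP d1.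
by rewrite raddfMn d1 mul0rn.
Qed.

Lemma fps_map_derD f g : fps_map d (fadd f g) = fadd (fps_map d f) (fps_map d g).
Proof. by apply: functional_extensionality => n; rewrite /fps_map /fadd raddfD. Qed.

Lemma fps_map_derM f g :
  fps_map d (fmul f g) = fadd (fmul (fps_map d f) g) (fmul f (fps_map d g)).
Proof.
apply: functional_extensionality => n; rewrite /fps_map /fadd /fmul raddf_sum -big_split.
by apply: eq_bigr => i _; rewrite derM.
Qed.

Lemma fps_map_derZ a f :
  fps_map d (fscale a f) = fadd (fscale (d a) f) (fscale a (fps_map d f)).
Proof. by apply: functional_extensionality => n; rewrite /fps_map /fadd /fscale derM. Qed.

Lemma fps_map_derT : fps_map d (fT A) = fzero.
Proof. by apply: functional_extensionality => n; rewrite /fps_map /fT derivation_natr. Qed.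

Variables m2 m3 m4 m6 : A.
Hypotheses (dm2 : d m2 = 3%:R) (dm3 : d m3 = 0) (dm4 : d m4 = 2%:R * m2) (dm6 : d m6 = m4).

Definition tate_rhs_ds (s : fps A) : fps A :=
  fadd (fscale m2 (fmul (fT A) (fT A)))
  (fadd (fscale (2%:R * m3) s)
  (fadd (fscale (2%:R * m4) (fmul (fT A) s))
        (fscale (3%:R * m6) (fmul s s)))).

Definition tate_rhs_dt (s : fps A) : fps A :=
  fadd (fscale 3%:R (fmul (fT A) (fT A)))
  (fadd (fscale (2%:R * m2) (fmul (fT A) s))
        (fscale m4 (fmul s s))).

Lemma tate_rhs_ds_coef0 s : s 0%N = 0 -> tate_rhs_ds s 0%N = 0.
Proof.
move=> s0; rewrite /tate_rhs_ds /fadd /fscale !fmul_coef0 s0 fT_coef0.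
by rewrite !(mulr0, addr0).
Qed.

Lemma fps_map_der_tate_rhs s :
  fps_map d (tate_rhs 0 m2 m3 m4 m6 s) =
  fadd (fmul s (tate_rhs_dt s)) (fmul (tate_rhs_ds s) (fps_map d s)).
Proof.
rewrite /tate_rhs !(fps_map_derD, fps_map_derM, fps_map_derZ) fps_map_derT.
rewrite raddf0 dm2 dm3 dm4 dm6 /tate_rhs_dt /tate_rhs_ds -!fmul_fcst.
rewrite !(fcstM, fcst_natr) fcst0 /=; ring.
Qed.

Lemma fderiv_tate_rhs s :
  fderiv (tate_rhs 0 m2 m3 m4 m6 s) =
  fadd (tate_rhs_dt s) (fmul (tate_rhs_ds s) (fderiv s)).
Proof.
rewrite /tate_rhs !(fderivD, fderivM, fderivZ) fderivT /tate_rhs_dt /tate_rhs_ds -!fmul_fcst.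
rewrite !(fcstM, fcst_natr) fcst0 /=; ring.
Qed.

Lemma is_tate_s_burgers S : is_tate_s 0 m2 m3 m4 m6 S -> fps_map d S = fmul S (fderiv S).
Proof.
move=> /is_tate_sE[S0 eq_S]; apply: fsub_eq0.
apply: fixed_fmulr_eq0 (tate_rhs_ds_coef0 S0).
have eq_dS :
    fps_map d S = fadd (fmul S (tate_rhs_dt S)) (fmul (tate_rhs_ds S) (fps_map d S)).
  by rewrite -fps_map_der_tate_rhs -eq_S.
have eq_S' : fderiv S = fadd (tate_rhs_dt S) (fmul (tate_rhs_ds S) (fderiv S)).
  by rewrite -fderiv_tate_rhs -eq_S.
rewrite {1}eq_dS {1}eq_S'; ring.
Qed.

End Derivation.
End FormalPowerSeries.

Section CoefficientMorphism.
Variables (A B : comRingType) (phi : {rmorphism A -> B}).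

Lemma fps_mapD f g : fps_map phi (fadd f g) = fadd (fps_map phi f) (fps_map phi g).
Proof. by apply: functional_extensionality => n; rewrite /fps_map /fadd rmorphD. Qed.

Lemma fps_mapM f g : fps_map phi (fmul f g) = fmul (fps_map phi f) (fps_map phi g).
Proof.
apply: functional_extensionality => n; rewrite /fps_map /fmul rmorph_sum.
by apply: eq_bigr => i _; rewrite rmorphM.
Qed.

Lemma fps_mapZ a f : fps_map phi (fscale a f) = fscale (phi a) (fps_map phi f).
Proof. by apply: functional_extensionality => n; rewrite /fps_map /fscale rmorphM. Qed.

Lemma fps_mapT : fps_map phi (fT A) = fT B.
Proof. by apply: functional_extensionality => n; rewrite /fps_map /fT rmorph_nat. Qed.

Lemma is_tate_s_map m1 m2 m3 m4 m6 n1 n2 n3 n4 n6 s :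
  phi m1 = n1 -> phi m2 = n2 -> phi m3 = n3 -> phi m4 = n4 -> phi m6 = n6 ->
  is_tate_s m1 m2 m3 m4 m6 s -> is_tate_s n1 n2 n3 n4 n6 (fps_map phi s).
Proof.
move=> <- <- <- <- <- /is_tate_sE[s0 eq_s]; split; first by rewrite /fps_map s0 rmorph0.
by rewrite {1}eq_s /tate_rhs !(fps_mapD, fps_mapM, fps_mapZ) fps_mapT.
Qed.

End CoefficientMorphism.

Lemma mu2v_deriv : mu2v^`() = 3%:R.
Proof. by rewrite /mu2v /v !derivE !(add0r, mul0r, addr0). Qed.

Lemma mu3v_deriv : mu3v^`() = 0.
Proof. exact: derivC. Qed.

Lemma mu4v_deriv : mu4v^`() = 2%:R * mu2v.
Proof.
rewrite /mu4v /mu2v /v !derivE !(add0r, mul0r, mulr0, mulr1, addr0) expr1.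
by rewrite mulrnAr mulrDr !mulr_natl.
Qed.

Lemma mu6v_deriv : mu6v^`() = mu4v.
Proof. by rewrite /mu6v /mu4v /v !derivE expr1 mulr1 addr0 mulrnAr !mulr_natl mulrnAl. Qed.

Lemma mu1v_at0 : mu1v.[0] = 0.
Proof. exact: horner0. Qed.

Lemma mu2v_at0 : mu2v.[0] = c2.
Proof.
rewrite /mu2v !(hornerD, hornerM, hornerX, hornerC, horner_exp, hornerMn).
by rewrite ?(expr0n, mul0r, mulr0, add0r).
Qed.

Lemma mu3v_at0 : mu3v.[0] = c3.
Proof. exact: hornerC. Qed.

Lemma mu4v_at0 : mu4v.[0] = c4.
Proof.
rewrite /mu4v !(hornerD, hornerM, hornerX, hornerC, horner_exp, hornerMn).
by rewrite ?(expr0n, mul0r, mulr0, add0r).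
Qed.

Lemma mu6v_at0 : mu6v.[0] = c6.
Proof.
rewrite /mu6v !(hornerD, hornerM, hornerX, hornerC, horner_exp, hornerMn).
by rewrite ?(expr0n, mul0r, mulr0, add0r).
Qed.

Theorem mainTheorem6 (S : fps Vring) (s0 : fps Cring) :
  is_tate_s mu1v mu2v mu3v mu4v mu6v S ->
  is_tate_s 0 c2 c3 c4 c6 s0 ->
  dv S = fmul S (fderiv S) /\ at_v0 S = s0.
Proof.
move=> tate_S tate_s0; split.
  exact: (is_tate_s_burgers (A := Vring) (d := deriv) (@derivM _)
    mu2v_deriv mu3v_deriv mu4v_deriv mu6v_deriv tate_S).
apply: is_tate_s_uniq tate_s0.
exact: (@is_tate_s_map Vring Cring (horner_eval 0) _ _ _ _ _ _ _ _ _ _ _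
  mu1v_at0 mu2v_at0 mu3v_at0 mu4v_at0 mu6v_at0 tate_S).
Qed.
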